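(* Let $\mathbb{Q}_2=\mathbb{Q}\times\mathbb{Q}$ and $$A:=\Big(\bigcup_{\mathbf{v}\in\mathbb{Q}_2}S(\mathbf{v},1)\Big)^c,\qquad S(\mathbf{v},1)=\{x\in\mathbb{R}^2:|x-\mathbf{v}|=1\}.$$ Then $A$ is a dense $G_\delta$ subset of $\mathbb{R}^2$ whose complement has two-dimensional Lebesgue measure zero, and $(A+S^1)\cap\mathbb{Q}_2=\emptyset$; in particular $A+S^1$ has empty interior.
   Context: $S^1$ is the Euclidean unit circle; $X+Y=\{x+y:x\in X,y\in Y\}$. *)

(* R^2 is modelled as R * R (product topology,
   product sigma-algebra, product of Lebesgue measures). *)
From HB Require Import structures.
From mathcomp Require Import all_boot all_order all_algebra.
From mathcomp Require Import all_classical all_reals all_analysis.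
From mathcomp Require Import borel_hierarchy.
Set Implicit Arguments. Unset Strict Implicit. Unset Printing Implicit Defensive.
Import Order.TTheory GRing.Theory Num.Theory.
Import numFieldNormedType.Exports.
Local Open Scope classical_set_scope.
Local Open Scope ring_scope.

Definition Q2 (R : realType) : set (R * R) :=
  [set v | exists p q : rat, v = (ratr p, ratr q)].

Definition dist2 (R : realType) (x y : R * R) : R :=
  Num.sqrt ((x.1 - y.1) ^+ 2 + (x.2 - y.2) ^+ 2).

Definition sphere2 (R : realType) (v : R * R) (r : R) : set (R * R) :=
  [set x | dist2 x v = r].

Definition S1 (R : realType) : set (R * R) := sphere2 (0, 0) 1.

Definition mink_sum (R : realType) (X Y : set (R * R)) : set (R * R) :=
  [set z | exists x y, X x /\ Y y /\ z = (x.1 + y.1, x.2 + y.2)].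

Definition Aset (R : realType) : set (R * R) :=
  ~` \bigcup_(v in @Q2 R) sphere2 v 1.

From HB Require Import structures.
From mathcomp Require Import all_boot all_order all_algebra.
From mathcomp Require Import all_classical all_reals all_analysis.
From mathcomp Require Import borel_hierarchy measurable_realfun.
Import Order.TTheory GRing.Theory Num.Theory.
Import numFieldNormedType.Exports.
Local Open Scope classical_set_scope.
Local Open Scope ring_scope.

(* The complement of A is the union of the countably many unit circles
   centred at points of Q_2.  Circles are closed, so A is a countable
   intersection of open sets.  A circle meets each vertical line in at most
   two points, so every vertical section of the complement of A is countable
   and, by Fubini, the complement is a null set; null sets contain no open
   rectangle, hence A is dense.  Finally z lies in A + S^1 exactly when the
   unit circle around z meets A, which fails for z in Q_2; as Q_2 is dense,
   A + S^1 has empty interior. *)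

Lemma Gdelta_setC_bigcup_closed (T : topologicalType) (I : countType)
    (F : I -> set T) :
  (forall i, closed (F i)) -> Gdelta (~` \bigcup_i F i).
Proof.
move=> cF; pose G n := if unpickle n is Some i then ~` F i else setT.
exists G => [n|].
  by rewrite /G; case: unpickle => [i|]; [exact: closed_openC | exact: openT].
rewrite setC_bigcup; apply/seteqP; split => x Fx n _.
  by rewrite /G; case: unpickle => // i; exact: Fx.
by have := Fx (pickle n) Logic.I; rewrite /G pickleK.
Qed.

Lemma interior_eq0_disjoint_dense (T : topologicalType) (X D : set T) :
  dense D -> X `&` D = set0 -> interior X = set0.
Proof.
move=> dD XD0; apply/seteqP; split => // z Xz.
have [w [Xw Dw]] := dD _ (ex_intro _ z Xz) (@open_interior _ X).
suff : (X `&` D) w by rewrite XD0.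
by split => //; exact: interior_subset.
Qed.

Section circles.
Variable R : realType.
Implicit Types (x v : R * R) (r : R).

Lemma sqr_dist2 x v : dist2 x v ^+ 2 = (x.1 - v.1) ^+ 2 + (x.2 - v.2) ^+ 2.
Proof. by rewrite sqr_sqrtr // addr_ge0 ?sqr_ge0. Qed.

Lemma continuous_dist2 v : continuous (fun x : R * R => dist2 x v).
Proof.
move=> x; apply: continuous_comp; last exact: sqrt_continuous.
apply: cvgD; rewrite expr2; apply: cvgM; apply: cvgB; try exact: cvg_cst.
all: first [exact: cvg_fst | exact: cvg_snd].
Qed.

Lemma measurable_dist2 v : measurable_fun setT (fun x : R * R => dist2 x v).
Proof.
apply: measurableT_comp.
  by apply: continuous_measurable_fun; exact: sqrt_continuous.
apply: measurable_funD; apply: measurable_funX; apply: measurable_funB;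
  first [exact: measurable_fst | exact: measurable_snd | exact: measurable_cst].
Qed.

Lemma closed_sphere2 v r : closed (sphere2 v r).
Proof.
apply: (@preimage_closed _ _ (fun x : R * R => dist2 x v) [set r]).
  by move=> x _; exact: continuous_dist2.
exact: closed_eq.
Qed.

Lemma measurable_sphere2 v r : measurable (sphere2 v r).
Proof.
have := measurable_dist2 v measurableT [set r] (measurable_set1 r).
by rewrite setTI.
Qed.

Lemma xsection_sphere2_sub v r (a : R) :
  let h := Num.sqrt (r ^+ 2 - (a - v.1) ^+ 2) in
  xsection (sphere2 v r) a `<=` [set v.2 + h; v.2 - h].
Proof.
move=> h b /xsectionP; rewrite /sphere2 /= => dr.
have hE : h = `|b - v.2|.
  by rewrite /h -dr sqr_dist2 /= addrAC subrr add0r sqrtr_sqr.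
have [b_ge|b_lt] := lerP v.2 b.
  by left; rewrite hE ger0_norm ?subr_ge0 // addrC subrK.
by right; rewrite hE ltr0_norm ?subr_lt0 // opprK addrC subrK.
Qed.

Lemma countable_xsection_bigcup_sphere2 (I : countType) (c : I -> R * R) r a :
  countable (xsection (\bigcup_i sphere2 (c i) r) a).
Proof.
rewrite xsectionE preimage_bigcup.
apply: bigcup_countable; first exact: countableP.
move=> i _; apply/finite_set_countable; rewrite -xsectionE.
exact: sub_finite_set (xsection_sphere2_sub _ _ _) (finite_set2 _ _).
Qed.

Notation lebesgue2 := ((@lebesgue_measure R) \x (@lebesgue_measure R))%E.

Lemma lebesgue2_bigcup_sphere2 (I : countType) (c : I -> R * R) r :
  lebesgue2 (\bigcup_i sphere2 (c i) r) = 0%E.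
Proof.
rewrite /product_measure1; apply: integral0_eq => a _ /=.
exact/countable_lebesgue_measure0/countable_xsection_bigcup_sphere2.
Qed.

Lemma measurable_bigcup_sphere2 (I : countType) (c : I -> R * R) r :
  measurable (\bigcup_i sphere2 (c i) r).
Proof.
apply: countable_bigcupT_measurable => [|i]; first exact: countableP.
exact: measurable_sphere2.
Qed.

Lemma ball_pairE (z : R * R) (e : R) : ball z e = ball z.1 e `*` ball z.2 e.
Proof. by []. Qed.

Lemma measurable_ball_pair (z : R * R) (e : R) : measurable (ball z e).
Proof. by rewrite ball_pairE; apply: measurableX; exact: measurable_ball. Qed.

Lemma lebesgue2_ball_gt0 z (e : R) : 0 < e -> (0 < lebesgue2 (ball z e))%E.
Proof.
move=> e_gt0; rewrite ball_pairE product_measure1E; try exact: measurable_ball.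
have := lebesgue_measure_ball z.1 (ltW e_gt0).
have := lebesgue_measure_ball z.2 (ltW e_gt0).
move=> /= -> ->.
by rewrite -EFinM lte_fin mulr_gt0 // mulrn_wgt0.
Qed.

Lemma dense_setC_lebesgue2_null (N : set (R * R)) :
  measurable N -> lebesgue2 N = 0%E -> dense (~` N).
Proof.
move=> mN N0 O [z Oz] oO; apply/set0P/negP => /eqP ON0.
have /nbhs_ballP[e e_gt0 zeO] := oO z Oz.
have zeN : ball z e `<=` N.
  move=> w zew; apply: contrapT => Nw.
  suff : (O `&` ~` N) w by rewrite ON0.
  by split => //; exact: zeO.
have N_le0 : (lebesgue2 N <= 0)%E by rewrite N0.
have := le_measure lebesgue2 (mem_set (measurable_ball_pair z e)) (mem_set mN).
move=> /(_ zeN)/le_trans/(_ N_le0); apply/negP; rewrite -ltNge.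
exact: lebesgue2_ball_gt0.
Qed.

Lemma dense_Q2 : dense (@Q2 R).
Proof.
move=> O [z Oz] oO; have /nbhs_ballP[e e_gt0 zeO] := oO z Oz.
have [x1 [zx1 [p _ px1]]] := @dense_rat R _ (ex_intro _ z.1 (ballxx z.1 e_gt0))
  (ball_open z.1 e).
have [x2 [zx2 [q _ qx2]]] := @dense_rat R _ (ex_intro _ z.2 (ballxx z.2 e_gt0))
  (ball_open z.2 e).
exists (ratr p, ratr q); split; last by exists p, q.
by apply: zeO; split; rewrite /= ?px1 ?qx2.
Qed.

Lemma mink_sum_sphere2 (X : set (R * R)) r z :
  mink_sum X (sphere2 (0, 0) r) z -> X `&` sphere2 z r !=set0.
Proof.
move=> [x [y [Xx [yr ->]]]]; exists x; split => //.
rewrite -yr /sphere2 /dist2 /= !subr0.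
by rewrite !opprD !addrA !subrr !add0r !sqrrN.
Qed.

Lemma AsetE :
  @Aset R = ~` \bigcup_(pq : rat * rat) sphere2 (ratr pq.1, ratr pq.2) 1.
Proof.
congr (~` _); apply/seteqP; split => x [v].
  by move=> [p [q ->]] vx; exists (p, q).
by move=> _ vx; exists (ratr v.1, ratr v.2) => //; exists v.1, v.2.
Qed.

Lemma mink_sum_Aset_S1_Q2 : mink_sum (@Aset R) (@S1 R) `&` @Q2 R = set0.
Proof.
apply/seteqP; split => // z [/mink_sum_sphere2 [x [Ax zx]] Q2z].
by apply: Ax; exists z.
Qed.

End circles.

Theorem mainTheorem9 (R : realType) :
  Gdelta (@Aset R) /\
  dense (@Aset R) /\
  measurable (~` @Aset R) /\
  ((@lebesgue_measure R) \x (@lebesgue_measure R))%E (~` @Aset R) = 0%E /\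
  mink_sum (@Aset R) (@S1 R) `&` @Q2 R = set0 /\
  interior (mink_sum (@Aset R) (@S1 R)) = set0.
Proof.
have AsetCE := congr1 setC (AsetE R); rewrite setCK in AsetCE.
split; first by rewrite AsetE; apply: Gdelta_setC_bigcup_closed => pq;
  exact: closed_sphere2.
split; first by rewrite AsetE; apply: dense_setC_lebesgue2_null;
  [exact: measurable_bigcup_sphere2 | exact: lebesgue2_bigcup_sphere2].
split; first by rewrite AsetCE; exact: measurable_bigcup_sphere2.
split; first by rewrite AsetCE; exact: lebesgue2_bigcup_sphere2.
split; first exact: mink_sum_Aset_S1_Q2.
exact: interior_eq0_disjoint_dense (dense_Q2 R) (mink_sum_Aset_S1_Q2 R).
Qed.
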